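(* Let $n\ge1$ and on $\mathbb{D}^n$ (coordinates $\alpha_0,\dots,\alpha_{n-1}$) use the Poisson bracket described in the context. Let $\Phi_k$ be the monic orthogonal polynomials on the unit circle and $\Phi_k^*$ their reversed polynomials. Then for all $z,w$, \[ \{\Phi_{n-1}(z),\Phi_n(w)\}=-i\bar\alpha_{n-1}\,w\,\frac{\Phi_{n-1}(z)\Phi_{n-1}^*(w)-\Phi_{n-1}(w)\Phi_{n-1}^*(z)}{z-w}, \] \[ \{\Phi_n(z),\Phi_{n-1}^*(w)\}=i\,zw\,\frac{\Phi_{n-1}(z)\Phi_{n-1}^*(w)-\Phi_{n-1}(w)\Phi_{n-1}^*(z)}{z-w}. \]
   Context: Let $\rho_j=(1-|\alpha_j|^2)^{1/2}$; the Poisson bracket is $\{f,g\}=\sum_{j=0}^{n-1}i\rho_j^2\bigl(\frac{\partial f}{\partial\bar\alpha_j}\frac{\partial g}{\partial\alpha_j}-\frac{\partial f}{\partial\alpha_j}\frac{\partial g}{\partial\bar\alpha_j}\bigr)$ (Wirtinger derivatives), i.e. $\{\alpha_j,\alpha_k\}=0$, $\{\alpha_j,\bar\alpha_k\}=-i\rho_j^2\delta_{jk}$; $z,w$ are held fixed. $\Phi_0=1$, $\Phi_{k+1}(z)=z\Phi_k(z)-\bar\alpha_k\Phi_k^*(z)$, $\Phi_k^*(z)=z^k\overline{\Phi_k(1/\bar z)}$. The identities are identities of polynomials in $z,w$. *)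

From HB Require Import structures.
From mathcomp Require Import all_boot all_order all_algebra.
From mathcomp Require Import mpoly.
Set Implicit Arguments. Unset Strict Implicit. Unset Printing Implicit Defensive.
Import Order.TTheory GRing.Theory Num.Theory.
Local Open Scope ring_scope.

(* Functions of (alpha_0,...,alpha_{n-1}) in D^n are modelled as polynomials in
   the 2n independent variables alpha_j = 'X_(lshift n j) and
   conj(alpha_j) = 'X_(rshift n j), with coefficients in a numeric closed
   field C (e.g. the complex numbers).  Wirtinger derivatives d/d alpha_j,
   d/d conj(alpha_j) are the formal partial derivatives in these variables. *)

Section OPUC.
Variables (C : numClosedFieldType) (n : nat).

Notation MP := {mpoly C[n + n]}.

(* alpha_k and conj(alpha_k) (set to 0 for k >= n, never used there) *)
Definition alpha (k : nat) : MP :=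
  if insub k is Some j then 'X_(lshift n (j : 'I_n)) else 0.
Definition alphab (k : nat) : MP :=
  if insub k is Some j then 'X_(rshift n (j : 'I_n)) else 0.

Definition swapvar (i : 'I_(n + n)) : 'I_(n + n) :=
  match split i with inl j => rshift n j | inr j => lshift n j end.

Definition mconj (p : MP) : MP :=
  mmap (fun c : C => (c^*)%:MP) (fun i => 'X_(swapvar i)) p.

Definition pbr (f g : MP) : MP :=
  \sum_(j < n)
    ('i%:MP * (1 - 'X_(lshift n j) * 'X_(rshift n j)) *
     (f^`M(rshift n j) * g^`M(lshift n j) - f^`M(lshift n j) * g^`M(rshift n j))).

(* reversed polynomial of degree k: P^*(z) = z^k conj(P(1/conj z)) *)
Definition revstar (k : nat) (P : {poly MP}) : {poly MP} :=
  \poly_(i < k.+1) mconj (P`_(k - i)).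

Fixpoint Phi (k : nat) : {poly MP} :=
  if k is k'.+1 then 'X * Phi k' - (alphab k')%:P * revstar k' (Phi k')
  else 1.

Definition Phistar (k : nat) : {poly MP} := revstar k (Phi k).

Definition evalz (P : {poly MP}) (z : C) : MP := P.[z%:MP].

End OPUC.

(* Phi_k and Phi_k^* involve only alpha_0, ..., alpha_(k-1) and their
   conjugates, so when the recursion
   Phi_(k+1) = z Phi_k - conj(alpha_k) Phi_k^*,
   Phi_(k+1)^* = Phi_k^* - alpha_k z Phi_k is expanded with the Leibniz rule,
   the only new bracket is {conj(alpha_k), alpha_k} = i rho_k^2.  Induction on
   k then gives {Phi_k(z), Phi_k(w)} = {Phi_k^*(z), Phi_k^*(w)} = 0 and
   {Phi_k(z), Phi_k^*(w)} = i w K_k(z, w), where K_k is the Christoffel-Darboux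
   kernel (Phi_k(z) Phi_k^*(w) - Phi_k(w) Phi_k^*(z)) / (z - w); the theorem is
   one more step of the recursion. *)

From Pilot Require Import Defs.
From HB Require Import structures.
From mathcomp Require Import all_boot all_order all_algebra.
From mathcomp Require Import mpoly ring.
Set Implicit Arguments.
Unset Strict Implicit.
Unset Printing Implicit Defensive.
Import Order.TTheory GRing.Theory Num.Theory.
Local Open Scope ring_scope.

Section PoissonOPUC.
Variables (C : numClosedFieldType) (n : nat).
Local Notation MP := {mpoly C[n + n]}.
Local Notation mconj := (@mconj C n).
Local Notation revstar := (@revstar C n).
Local Notation alpha := (alpha C n).
Local Notation alphab := (alphab C n).
Implicit Types P Q : {poly MP}.

Definition conj_mpolyC : {rmorphism C -> MP} :=
  (@mpolyC (n + n) C) \o Num.Def.conjC.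

Lemma mconjE : mconj =1 mmap conj_mpolyC (fun i => 'X_(swapvar i)).
Proof. by []. Qed.

HB.instance Definition _ :=
  GRing.RMorphism.copy mconj (mmap conj_mpolyC (fun i => 'X_(swapvar i))).

Lemma swapvar_lshift (j : 'I_n) : swapvar (lshift n j) = rshift n j.
Proof. by rewrite /swapvar (unsplitK (inl j)). Qed.

Lemma swapvar_rshift (j : 'I_n) : swapvar (rshift n j) = lshift n j.
Proof. by rewrite /swapvar (unsplitK (inr j)). Qed.

Lemma swapvarK : involutive (@swapvar n).
Proof.
by move=> i; rewrite -[i]splitK; case: (split i) => j /=;
  rewrite ?(swapvar_lshift, swapvar_rshift).
Qed.

Lemma mconjC (c : C) : mconj c%:MP = (c^*)%:MP.
Proof. by rewrite mconjE mmapC. Qed.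

Lemma mconjX (i : 'I_(n + n)) : mconj 'X_i = 'X_(swapvar i).
Proof. by rewrite mconjE mmapX mmap1U. Qed.

Lemma mconjK : involutive mconj.
Proof.
elim/mpolyind=> [|c m p _ _ IH]; first by rewrite !rmorph0.
rewrite -mul_mpolyC !(rmorphD, rmorphM) /= IH !mconjC conjCK mpolyXE_id.
rewrite !rmorph_prod /=; congr (_ * _ + _); apply: eq_bigr => i _.
by rewrite !rmorphXn /= !mconjX swapvarK.
Qed.

Lemma mconj_alphab k : mconj (alphab k) = alpha k.
Proof.
by rewrite /Defs.alpha /Defs.alphab; case: insubP => [j _ _|_];
  rewrite ?mconjX ?swapvar_rshift ?rmorph0.
Qed.

Lemma size_revstar k P : (size (revstar k P) <= k.+1)%N.
Proof. exact: size_poly. Qed.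

Lemma revstarB k : {morph revstar k : P Q / P - Q}.
Proof.
move=> P Q; apply/polyP => i; rewrite coefB !coef_poly coefB rmorphB.
by case: ltnP; rewrite ?subr0.
Qed.

Lemma revstarCM k c P : revstar k (c%:P * P) = (mconj c)%:P * revstar k P.
Proof.
apply/polyP => i; rewrite coefCM !coef_poly coefCM rmorphM.
by case: ltnP; rewrite ?mulr0.
Qed.

Lemma revstarXM k P : revstar k.+1 ('X * P) = revstar k P.
Proof.
apply/polyP => i; rewrite !coef_poly coefXM.
case: (ltngtP i k.+1) => [i_le_k|k_lt_i|->].
- by rewrite ltnS (ltnW i_le_k) subSn.
- by rewrite ltnNge k_lt_i.
- by rewrite ltnSn subnn rmorph0.
Qed.

Lemma revstarS k P : (size P <= k.+1)%N -> revstar k.+1 P = 'X * revstar k P.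
Proof.
move=> szP; apply/polyP => -[|i]; rewrite coefXM !coef_poly //.
by rewrite subn0 nth_default ?rmorph0.
Qed.

Lemma revstarK k P : (size P <= k.+1)%N -> revstar k (revstar k P) = P.
Proof.
move=> szP; apply/polyP => i; rewrite !coef_poly.
case: ltnP => [i_le_k|k_lt_i]; last by rewrite nth_default // (leq_trans szP).
by rewrite subKn // ltnS leq_subr mconjK.
Qed.

Local Notation Phi := (Phi C n).
Local Notation Phistar := (Phistar C n).

Lemma PhiS k : Phi k.+1 = 'X * Phi k - (alphab k)%:P * Phistar k.
Proof. by []. Qed.

Lemma size_Phi k : (size (Phi k) <= k.+1)%N.
Proof.
elim: k => [|k IH]; first by rewrite size_poly1.
rewrite PhiS (leq_trans (size_add _ _)) // geq_max size_opp mul_polyC.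
rewrite (leq_trans (size_scale_leq _ _)) ?(leq_trans (size_revstar _ _)) //.
by rewrite (leq_trans (size_mul_leq _ _)) // size_polyX.
Qed.

Lemma Phistar0 : Phistar 0 = 1.
Proof. by apply/polyP => -[|[|i]]; rewrite coef_poly coef1 //= rmorph1. Qed.

Lemma PhistarS k : Phistar k.+1 = Phistar k - (alpha k)%:P * ('X * Phi k).
Proof.
rewrite /Defs.Phistar PhiS revstarB revstarXM revstarCM mconj_alphab.
by rewrite revstarS ?size_revstar // revstarK ?size_Phi.
Qed.

Local Notation phi k z := (evalz (Phi k) z).
Local Notation phis k z := (evalz (Phistar k) z).

Lemma phi0 z : phi 0 z = 1.
Proof. by rewrite /evalz hornerC. Qed.

Lemma phis0 z : phis 0 z = 1.
Proof. by rewrite /evalz Phistar0 hornerC. Qed.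

Lemma phiS k z : phi k.+1 z = z%:MP * phi k z - alphab k * phis k z.
Proof. by rewrite /evalz PhiS !hornerE. Qed.

Lemma phisS k z : phis k.+1 z = phis k z - alpha k * (z%:MP * phi k z).
Proof. by rewrite /evalz PhistarS !hornerE. Qed.

Definition alpha_index (i : 'I_(n + n)) : nat :=
  match split i with inl j | inr j => j end.

Lemma alpha_index_lshift (j : 'I_n) : alpha_index (lshift n j) = j.
Proof. by rewrite /alpha_index (unsplitK (inl j)). Qed.

Lemma alpha_index_rshift (j : 'I_n) : alpha_index (rshift n j) = j.
Proof. by rewrite /alpha_index (unsplitK (inr j)). Qed.

Lemma mderivXU (i i' : 'I_(n + n)) : ('X_i : MP)^`M(i') = (i == i')%:R.
Proof.
rewrite mderivX mnm1E; case: eqVneq => [<-|_]; last by rewrite scale0r.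
suff -> : (U_(i) - U_(i) = 0)%MM by rewrite mpolyX0 scale1r.
by apply/mnmP => l; rewrite mnmBE subnn mnm0E.
Qed.

Lemma mderiv_alpha l i :
  l != alpha_index i -> (alpha l)^`M(i) = 0 /\ (alphab l)^`M(i) = 0.
Proof.
rewrite /Defs.alpha /Defs.alphab; case: insubP => [j _ <-|_] l_neq_i;
  last by rewrite mderiv0.
split; rewrite mderivXU; case: eqP => // eq_i; move: l_neq_i;
  by rewrite -eq_i ?alpha_index_lshift ?alpha_index_rshift eqxx.
Qed.

Definition free_from k (p : MP) :=
  forall i, (k <= alpha_index i)%N -> p^`M(i) = 0.

Lemma free_from_phi k z : free_from k (phi k z) /\ free_from k (phis k z).
Proof.
elim: k => [|k [IHf IHs]].
  by rewrite phi0 phis0 -mpolyC1; split=> i _; rewrite mderivC.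
split=> i k_lt_i; have k_le_i := ltnW k_lt_i.
all: have [da db] : (alpha k)^`M(i) = 0 /\ (alphab k)^`M(i) = 0
  by apply: mderiv_alpha; rewrite neq_ltn k_lt_i.
all: rewrite ?phiS ?phisS !(mderivB, mderivM, mderivC) ?da ?db IHf ?IHs //.
all: by rewrite !(mul0r, mulr0, addr0, subrr).
Qed.

Implicit Types p q : MP.

Lemma pbr_antisym p q : pbr p q = - pbr q p.
Proof. by rewrite /pbr -sumrN; apply: eq_bigr => j _; ring. Qed.

Lemma pbrxx p : pbr p p = 0.
Proof. by rewrite pbr_antisym /pbr big1 ?oppr0 // => j _; ring. Qed.

Lemma pbrCl c q : pbr c%:MP q = 0.
Proof. by rewrite /pbr big1 // => j _; rewrite !mderivC; ring. Qed.

Lemma pbrDl p1 p2 q : pbr (p1 + p2) q = pbr p1 q + pbr p2 q.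
Proof.
by rewrite /pbr -big_split; apply: eq_bigr => j _; rewrite !mderivD /=; ring.
Qed.

Lemma pbrNl p q : pbr (- p) q = - pbr p q.
Proof.
by rewrite /pbr -sumrN; apply: eq_bigr => j _; rewrite !mderivN; ring.
Qed.

Lemma pbrMl p1 p2 q : pbr (p1 * p2) q = p1 * pbr p2 q + p2 * pbr p1 q.
Proof.
rewrite /pbr !mulr_sumr -big_split; apply: eq_bigr => j _.
by rewrite !mderivM /=; ring.
Qed.

Lemma pbrCr c p : pbr p c%:MP = 0.
Proof. by rewrite pbr_antisym pbrCl oppr0. Qed.

Lemma pbrDr p q1 q2 : pbr p (q1 + q2) = pbr p q1 + pbr p q2.
Proof. by rewrite pbr_antisym pbrDl opprD -!pbr_antisym. Qed.

Lemma pbrNr p q : pbr p (- q) = - pbr p q.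
Proof. by rewrite pbr_antisym pbrNl opprK -pbr_antisym. Qed.

Lemma pbrMr p q1 q2 : pbr p (q1 * q2) = q1 * pbr p q2 + q2 * pbr p q1.
Proof. by rewrite pbr_antisym pbrMl opprD -!mulrN -!pbr_antisym. Qed.

Lemma pbrBl p1 p2 q : pbr (p1 - p2) q = pbr p1 q - pbr p2 q.
Proof. by rewrite pbrDl pbrNl. Qed.

Lemma pbrBr p q1 q2 : pbr p (q1 - q2) = pbr p q1 - pbr p q2.
Proof. by rewrite pbrDr pbrNr. Qed.

Lemma pbrXl p (j : 'I_n) :
  pbr p 'X_(lshift n j)
  = 'i%:MP * (1 - 'X_(lshift n j) * 'X_(rshift n j)) * p^`M(rshift n j).
Proof.
rewrite /pbr (bigD1 j) //= big1 ?addr0 => [|l l_neq_j];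
  rewrite !mderivXU eq_lrshift (inj_eq (@lshift_inj _ _)) ?eqxx /=; first ring.
by rewrite eq_sym (negbTE l_neq_j) /=; ring.
Qed.

Lemma pbrXr p (j : 'I_n) :
  pbr p 'X_(rshift n j)
  = - ('i%:MP * (1 - 'X_(lshift n j) * 'X_(rshift n j)) * p^`M(lshift n j)).
Proof.
rewrite /pbr (bigD1 j) //= big1 ?addr0 => [|l l_neq_j];
  rewrite !mderivXU eq_rlshift (inj_eq (@rshift_inj _ _)) ?eqxx /=; first ring.
by rewrite eq_sym (negbTE l_neq_j) /=; ring.
Qed.

Lemma pbr_free_from k p :
  free_from k p -> pbr p (alpha k) = 0 /\ pbr p (alphab k) = 0.
Proof.
rewrite /Defs.alpha /Defs.alphab; case: insubP => [j _ <-|_] p_free;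
  last by rewrite -mpolyC0 pbrCr.
rewrite pbrXl pbrXr !p_free ?alpha_index_lshift ?alpha_index_rshift //.
by rewrite !mulr0 oppr0.
Qed.

Lemma pbr_alphab_alpha k :
  (k < n)%N -> pbr (alphab k) (alpha k) = 'i%:MP * (1 - alpha k * alphab k).
Proof.
move=> k_lt_n; rewrite /Defs.alpha /Defs.alphab insubT /=.
by rewrite pbrXl mderivXU eqxx mulr1.
Qed.

Definition christoffel_darboux k z w : MP :=
  (z - w)^-1 *: (phi k z * phis k w - phi k w * phis k z).

Lemma pbr_phi k z w : (k <= n)%N -> z != w ->
  [/\ pbr (phi k z) (phi k w) = 0, pbr (phis k z) (phis k w) = 0
    & pbr (phi k z) (phis k w) = 'i%:MP * w%:MP * christoffel_darboux k z w].
Proof.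
elim: k z w => [|k IH] z w k_le_n z_neq_w.
  rewrite /christoffel_darboux !phi0 !phis0 -mpolyC1 !pbrCl.
  by rewrite subrr scaler0 mulr0.
have [FzFw GzGw FzGw] := IH z w (ltnW k_le_n) z_neq_w.
have [|_ _ FwGz] := IH w z (ltnW k_le_n); first by rewrite eq_sym.
have [[fFz fGz] [fFw fGw]] := (free_from_phi k z, free_from_phi k w).
have [[aFz bFz] [aGz bGz]] := (pbr_free_from fFz, pbr_free_from fGz).
have [[aFw bFw] [aGw bGw]] := (pbr_free_from fFw, pbr_free_from fGw).
rewrite /christoffel_darboux !phiS !phisS.
rewrite !(pbrBl, pbrBr, pbrMl, pbrMr, pbrCl, pbrCr, pbrxx) pbr_alphab_alpha //.
rewrite !(pbr_antisym (alpha k)) !(pbr_antisym (alphab k)).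
rewrite (pbr_antisym (phis k z)) aFz bFz aGz bGz aFw bFw aGw bGw.
rewrite FzFw GzGw FzGw FwGz /christoffel_darboux.
rewrite -[w - z]opprB invrN scaleNr -!mul_mpolyC.
set u := ((z - w)^-1)%:MP.
have zu : z%:MP * u = 1 + w%:MP * u.
  rewrite -[z%:MP](subrK w%:MP) mulrDl -rmorphB -rmorphM mulfV ?rmorph1 //.
  by rewrite subr_eq0.
by split; ring: zu.
Qed.

End PoissonOPUC.

Theorem theorem13p6 (C : numClosedFieldType) (n : nat) (z w : C) :
  (1 <= n)%N -> z != w ->
  let P z := evalz (Phi C n n.-1) z in
  let Ps z := evalz (Phistar C n n.-1) z in
  let Q := (z - w)^-1 *: (P z * Ps w - P w * Ps z) in
  pbr (P z) (evalz (Phi C n n) w)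
    = - 'i%:MP * alphab C n n.-1 * w%:MP * Q /\
  pbr (evalz (Phi C n n) z) (Ps w)
    = 'i%:MP * (z * w)%:MP * Q.
Proof.
move=> n_gt0 z_neq_w P Ps Q; set k := n.-1 in P Ps Q *.
have k_lt_n : (k < n)%N by rewrite prednK.
have -> : Phi C n n = Phi C n k.+1 by rewrite prednK.
have -> : Q = christoffel_darboux n k z w by [].
have [FzFw GzGw FzGw] := pbr_phi (ltnW k_lt_n) z_neq_w.
have [[fFz _] [_ fGw]] := (free_from_phi n k z, free_from_phi n k w).
have [[_ bFz] [_ bGw]] := (pbr_free_from fFz, pbr_free_from fGw).
rewrite /P /Ps !phiS !(pbrBl, pbrBr, pbrMl, pbrMr, pbrCl, pbrCr).
rewrite FzFw GzGw FzGw bFz (pbr_antisym (alphab C n k)) bGw rmorphM /=.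
by split; ring.
Qed.
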